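(* Let $P$ be a polygon with vertex set $V$ and a non-empty dissection $D$, and let $d=\{\zeta,\eta\}\in D$ be such that $D = \{d\}\cup D_2$ where $D_2$ is a dissection of the subpolygon $P_2$ with vertex set $V_2 = \{\varepsilon \in V : \eta \le \varepsilon \le \zeta\}$ (so no diagonal of $D$ has an end point strictly between $\zeta$ and $\eta$). If $\alpha \neq \beta$ are in $V_2$, then $\mathcal{T}_{P,D}(\alpha,\beta) = \mathcal{T}_{P_2,D_2}(\alpha,\beta)$.
   Context: A polygon $P$ is a finite set $V$ of at least three vertices with a cyclic order, pictured as a convex polygon in the plane with vertices anticlockwise. For vertices $a,b$, ''$a \le \varepsilon \le b$'' means $\varepsilon$ lies on the cyclic interval from $a$ to $b$ traversed in the positive cyclic direction, endpoints included (''$<$'' excludes the endpoint). A subpolygon is a subset of $V$ of at least three vertices with the induced cyclic order. A diagonal is a two-element subset of the vertex set (edges included); non-edges are internal. Two diagonals cross if they consist of four distinct vertices $\alpha,\beta,\gamma,\delta$ appearing cyclically as $\alpha,\gamma,\beta,\delta$ or $\alpha,\delta,\beta,\gamma$. A dissection is a set of pairwise non-crossing internal diagonals. For vertices $\pi_1\neq\pi_p$, a $T$-path from $\pi_1$ to $\pi_p$ w.r.t. a dissection $D$ of a polygon $Q$ is a tuple $(\pi_1,\dots,\pi_p)$ of vertices of $Q$ with: (i) $\{\pi_1,\pi_2\},\dots,\{\pi_{p-1},\pi_p\}$ pairwise different diagonals; (ii) no $\{\pi_i,\pi_{i+1}\}$ crosses a diagonal of $D$; (iii) each $\{\pi_{2j},\pi_{2j+1}\}$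 lies in $D$, and these cross the segment $\{\pi_1,\pi_p\}$ at pairwise different points progressing monotonically from $\pi_1$ to $\pi_p$. $\mathcal{T}_{Q,D}(\alpha,\beta)$ denotes the set of such paths from $\alpha$ to $\beta$. *)

(* A polygon is modelled as a set of vertices Q : {set 'I_n}
   (with at least 3 elements), with the cyclic order induced from the standard
   cyclic order 0 < 1 < ... < n-1 < 0 of 'I_n (anticlockwise). *)
From mathcomp Require Import all_boot.
Set Implicit Arguments. Unset Strict Implicit. Unset Printing Implicit Defensive.

Section Polygons.
Variable n : nat.

(* a <= e <= b : e lies on the closed cyclic interval from a to b
   traversed in the positive direction. *)
Definition in_arc (a b e : 'I_n) : bool :=
  if (a <= b)%N then (a <= e <= b)%N else (a <= e)%N || (e <= b)%N.

Definition in_oarc (a b e : 'I_n) : bool :=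
  [&& in_arc a b e, e != a & e != b].

Definition polygon (Q : {set 'I_n}) : Prop := (3 <= #|Q|)%N.

Definition subpoly (Q : {set 'I_n}) (a b : 'I_n) : {set 'I_n} :=
  [set e in Q | in_arc a b e].

(* a diagonal of Q: a two-element subset of its vertex set (edges included) *)
Definition is_diag (Q d : {set 'I_n}) : bool := (d \subset Q) && (#|d| == 2).

Definition is_edge (Q d : {set 'I_n}) : bool :=
  [exists a, exists b, [&& d == [set a; b], a != b &
     [forall e, (e \in Q) ==> ~~ in_oarc a b e]]].

Definition internal_diag (Q d : {set 'I_n}) : bool :=
  is_diag Q d && ~~ is_edge Q d.

(* crossing: four distinct vertices a,b,c,e appearing cyclically as a,c,b,e
   with d1 = {a,b}, d2 = {c,e} (the other order is covered by swapping c,e). *)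
Definition crosses (d1 d2 : {set 'I_n}) : bool :=
  [exists a, exists b, exists c, exists e,
    [&& d1 == [set a; b], d2 == [set c; e], uniq [:: a; b; c; e],
        in_oarc a b c & in_oarc b a e]].

Definition dissection (Q : {set 'I_n}) (D : {set {set 'I_n}}) : bool :=
  [forall d in D, internal_diag Q d] &&
  [forall d1 in D, forall d2 in D, ~~ crosses d1 d2].

Definition steps (s : seq 'I_n) : seq {set 'I_n} :=
  [seq [set x.1; x.2] | x <- zip s (behead s)].

(* For two diagonals dj, dk (both crossing the segment towards b),
   dk crosses the segment strictly after dj (going towards b): dk lies in the
   closed side of dj containing b (and dj <> dk). *)
Definition before (b : 'I_n) (dj dk : {set 'I_n}) : bool :=
  (dj != dk) &&
  [exists u, exists v, [&& dj == [set u; v], in_arc u v b &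
      dk \subset [set e | in_arc u v e]]].

(* T-paths from a to b w.r.t. the dissection D of the polygon Q.
   0-indexed step k is {pi_(k+1), pi_(k+2)} in the paper's 1-indexed notation,
   so the paper's even steps {pi_2j, pi_2j+1} are the odd k. *)
Definition is_Tpath (Q : {set 'I_n}) (D : {set {set 'I_n}}) (a b : 'I_n)
    (s : seq 'I_n) : Prop :=
  let st := steps s in
  [/\ (exists t, s = a :: t /\ last a t = b) /\ a != b,
      all (fun x => x \in Q) s &&
      all (is_diag Q) st && uniq st,
      (forall d, d \in st -> forall d', d' \in D -> ~~ crosses d d'),
      (forall k, (k < size st)%N -> odd k ->
          nth set0 st k \in D /\ crosses (nth set0 st k) [set a; b])
    & (forall j k, (j < k)%N -> (k < size st)%N -> odd j -> odd k ->
          before b (nth set0 st j) (nth set0 st k))].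

End Polygons.

From mathcomp Require Import all_boot zify.
Set Implicit Arguments.
Unset Strict Implicit.
Unset Printing Implicit Defensive.

(* Apart from alpha and beta, every vertex of a T-path is an end point of one
   of its odd steps, and these are diagonals of D crossing {alpha, beta}.  The
   diagonal {zeta, eta} crosses no chord with both ends on the arc from eta to
   zeta, in particular neither {alpha, beta} nor any diagonal of P2.  Hence the
   odd steps of a T-path for (P, D) lie in D2, so the whole path lies in P2;
   conversely every condition for (P2, D2) implies the one for (P, D). *)

Section Polygons.
Variable n : nat.
Implicit Types (a b c e h z : 'I_n) (d : {set 'I_n}) (s : seq 'I_n).

Lemma in_oarc_interlace a b c e :
  in_oarc a b c -> in_oarc b a e -> in_oarc c e b && in_oarc e c a.
Proof.
rewrite /in_oarc /in_arc -!(inj_eq val_inj) /=.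
by case: (leqP a b) => ?; case: (leqP b a) => ?; case: (leqP c e) => ?;
   case: (leqP e c) => ? /=; lia.
Qed.

Lemma crossesC d1 d2 : crosses d1 d2 = crosses d2 d1.
Proof.
suff crossesW d3 d4 : crosses d3 d4 -> crosses d4 d3.
  by apply/idP/idP; apply: crossesW.
case/existsP=> a /existsP[b /existsP[c /existsP[e]]].
case/and5P=> /eqP-> /eqP-> uniq_abce ac_b ba_e.
have /andP[ce_b ec_a] := in_oarc_interlace ac_b ba_e.
apply/existsP; exists c; apply/existsP; exists e.
apply/existsP; exists b; apply/existsP; exists a.
rewrite [[set b; a]]setUC !eqxx ce_b ec_a /= andbT.
by move: uniq_abce; rewrite /= !inE -!(inj_eq val_inj) /=; lia.
Qed.

Lemma in_arc_not_interlace h z a b :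
  in_arc h z a -> in_arc h z b -> in_oarc a b z -> in_oarc b a h -> False.
Proof.
rewrite /in_oarc /in_arc -!(inj_eq val_inj) /=.
by case: (leqP h z) => ?; case: (leqP a b) => ?; case: (leqP b a) => ? /=; lia.
Qed.

Lemma arc_not_crosses h z d :
  d \subset [set e | in_arc h z e] -> ~~ crosses d [set z; h].
Proof.
move=> /subsetP d_arc; apply/negP.
case/existsP=> a /existsP[b /existsP[c /existsP[e]]].
case/and5P=> /eqP d_ab /eqP zh_ce uniq_abce ab_c ba_e.
have arc_a : in_arc h z a by have := d_arc a; rewrite d_ab set21 inE; apply.
have arc_b : in_arc h z b by have := d_arc b; rewrite d_ab set22 inE; apply.
have : c \in [set z; h] by rewrite zh_ce set21.
have : e \in [set z; h] by rewrite zh_ce set22.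
case/set2P=> e_zh; case/set2P=> c_zh; subst e c.
all: move: uniq_abce; rewrite /= !inE ?eqxx ?orbT ?andbF //= => _.
- exact: in_arc_not_interlace arc_b arc_a ba_e ab_c.
- exact: in_arc_not_interlace arc_a arc_b ab_c ba_e.
Qed.

Lemma steps_cons2 x y s : steps [:: x, y & s] = [set x; y] :: steps (y :: s).
Proof. by []. Qed.

Lemma size_steps s : size (steps s) = (size s).-1.
Proof. by rewrite size_map size_zip size_behead; case: s => //= x s; apply/minn_idPr. Qed.

Lemma nth_steps x0 s k : (k.+1 < size s)%N ->
  nth set0 (steps s) k = [set nth x0 s k; nth x0 s k.+1].
Proof.
move=> lt_k1_s; rewrite (nth_map (x0, x0)); last by rewrite size_zip size_behead; lia.
by rewrite nth_zip_cond size_zip size_behead ifT /= ?nth_behead //; lia.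
Qed.

Lemma steps_subset (A : {set 'I_n}) s :
  {subset s <= A} -> {in steps s, forall d, d \subset A}.
Proof.
elim: s => [|x [|y s] IHs] // sA d; rewrite steps_cons2 inE => /predU1P[-> | ].
  by apply/subsetP=> u /set2P[]->; apply: sA; rewrite !inE eqxx ?orbT.
by apply: IHs => u u_ys; apply: sA; rewrite inE u_ys orbT.
Qed.

Lemma odd_steps_cover (A : {set 'I_n}) x s :
  x \in A -> last x s \in A ->
  (forall k, (k < size (steps (x :: s)))%N -> odd k ->
     nth set0 (steps (x :: s)) k \subset A) ->
  {subset x :: s <= A}.
Proof.
move=> xA lastA odd_stepsA y /(nthP x)[[|i] lt_i_s <-] //=.
rewrite size_steps /= in odd_stepsA; rewrite /= ltnS in lt_i_s.
have [lt_i1_s | ] := ltnP i.+1 (size s); last first.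
  by move=> ge_i1_s; rewrite (_ : i = (size s).-1) ?nth_last //; lia.
have [odd_i | even_i] := boolP (odd i).
  have := odd_stepsA i lt_i_s odd_i; rewrite (nth_steps x) //= => /subsetP; apply.
  by rewrite set22.
have := odd_stepsA i.+1 lt_i1_s even_i; rewrite (nth_steps x) //= => /subsetP; apply.
by rewrite set21.
Qed.

Section Restriction.
Variables (Q Q2 : {set 'I_n}) (D2 : {set {set 'I_n}}) (d : {set 'I_n}).
Hypotheses (sub_Q2 : Q2 \subset Q) (D2_Q2 : {in D2, forall d', d' \subset Q2})
  (d_hidden : forall d', d' \subset Q2 -> ~~ crosses d' d).

Lemma is_Tpath_restrict a b s : a \in Q2 -> b \in Q2 ->
  is_Tpath Q (d |: D2) a b s -> is_Tpath Q2 D2 a b s.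
Proof.
move=> aQ2 bQ2 [[[t [-> last_t]] ab] /andP[/andP[_ diagQ] uniq_st]].
move=> no_cross odd_st before_st.
have ab_Q2 : [set a; b] \subset Q2 by apply/subsetP=> u /set2P[]->.
have odd_D2 k : (k < size (steps (a :: t)))%N -> odd k ->
    nth set0 (steps (a :: t)) k \in D2.
  move=> lt_k odd_k; have [] := odd_st k lt_k odd_k.
  by case/setU1P=> [-> | //]; rewrite crossesC (negbTE (d_hidden ab_Q2)).
have sQ2 : {subset a :: t <= Q2}.
  by apply: odd_steps_cover => // [|k lt_k odd_k]; [rewrite last_t | apply/D2_Q2/odd_D2].
split=> //.
- by split=> //; exists t.
- rewrite uniq_st andbT; apply/andP; split; first exact/allP.
  apply/allP=> e st_e; rewrite /is_diag (steps_subset sQ2 st_e).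
  by case/andP: (allP diagQ e st_e).
- by move=> e st_e e' D2e'; apply: no_cross; rewrite ?setU1r.
- by move=> k lt_k odd_k; split; [apply: odd_D2 | case: (odd_st k lt_k odd_k)].
Qed.

Lemma is_Tpath_extend a b s :
  is_Tpath Q2 D2 a b s -> is_Tpath Q (d |: D2) a b s.
Proof.
case=> ends /andP[/andP[/allP sQ2 diagQ2] uniq_st] no_cross odd_st before_st.
split=> //.
- rewrite uniq_st andbT; apply/andP; split.
    by apply/allP=> x /sQ2; apply/subsetP.
  apply/allP=> e /(allP diagQ2) /andP[e_Q2 card_e].
  by rewrite /is_diag (subset_trans e_Q2 sub_Q2).
- move=> e st_e e'; case/setU1P=> [-> | ]; last exact: no_cross.
  exact/d_hidden/(steps_subset sQ2).
- move=> k lt_k odd_k; have [st_D2 cross_ab] := odd_st k lt_k odd_k.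
  by split=> //; apply: setU1r.
Qed.

End Restriction.
End Polygons.

Theorem lemma3p4 (n : nat) (P : {set 'I_n}) (D D2 : {set {set 'I_n}})
    (zeta eta alpha beta : 'I_n) :
  polygon P -> dissection P D -> D != set0 ->
  [set zeta; eta] \in D ->
  polygon (subpoly P eta zeta) ->
  dissection (subpoly P eta zeta) D2 ->
  D = [set zeta; eta] |: D2 ->
  alpha \in subpoly P eta zeta -> beta \in subpoly P eta zeta -> alpha != beta ->
  forall s : seq 'I_n,
    is_Tpath P D alpha beta s <-> is_Tpath (subpoly P eta zeta) D2 alpha beta s.
Proof.
move=> _ _ _ _ _ /andP[/forall_inP D2_diag _] -> alphaP2 betaP2 _ s.
have sub_P2 : subpoly P eta zeta \subset P.
  by apply/subsetP=> x; rewrite inE => /andP[].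
have D2_P2 : {in D2, forall d : {set 'I_n}, d \subset subpoly P eta zeta}.
  by move=> d /D2_diag /andP[/andP[]].
have d_hidden (d : {set 'I_n}) :
    d \subset subpoly P eta zeta -> ~~ crosses d [set zeta; eta].
  move=> d_P2; apply: arc_not_crosses; apply: subset_trans d_P2 _.
  by apply/subsetP=> x; rewrite !inE => /andP[].
split; [exact: is_Tpath_restrict | exact: is_Tpath_extend].
Qed.
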